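(* Let $d\ge1$ and let $A$ be the adjacency matrix of a tournament of Type (2) with $n=2d$ vertices whose Seidel matrix has spectrum $\{(-\theta)^d,\theta^d\}$ with $\theta>0$. Then $d$ is even and $I+A-A^T$ is a skew Hadamard matrix.
   Context: A tournament on vertex set $V$ is an orientation of the complete graph on $V$; its adjacency matrix $A$ has $A_{xy}=1$ if $x\to y$ and $0$ otherwise, and its Seidel matrix is $S=\sqrt{-1}(A-A^T)$. Let $\tau_1<\cdots<\tau_s$ be the distinct eigenvalues of $S$ with multiplicities $m_i$, and main angles $\beta_i=\frac1{\sqrt n}\|E_ij\|$, where $E_i$ is the orthogonal projection onto the $\tau_i$-eigenspace and $j$ the all-ones vector. The tournament is of Type (1) if $\beta_1=0$; of Type (2) if $\beta_1\neq0$ and $m_1>1$; of Type (3) if $m_1=1$, $\beta_2=0$ and $c_2<0$, where $c_2=n\beta_1^2/(\tau_1-\tau_2)+\sum_{i=3}^s n\beta_i^2/(\tau_i-\tau_2)$; and of Type (4) otherwise. An $n\times n$ $(\pm1)$-matrix $H$ is skew Hadamard if $H+H^T=2I$ and $HH^T=nI$. *)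

From HB Require Import structures.
From mathcomp Require Import all_boot all_order all_algebra all_field.
Set Implicit Arguments. Unset Strict Implicit. Unset Printing Implicit Defensive.
Import Order.TTheory GRing.Theory Num.Theory.
Local Open Scope ring_scope.

(* A is the (0/1) adjacency matrix of a tournament on 'I_n:
   A x y = 1 iff x -> y; exactly one orientation per pair, no loops. *)
Definition is_tournament_adj (n : nat) (A : 'M[int]_n) : Prop :=
  (forall x y, A x y = 0 \/ A x y = 1) /\
  (forall x, A x x = 0) /\
  (forall x y, x != y -> A x y + A y x = 1).

Definition seidel (n : nat) (A : 'M[int]_n) : 'M[algC]_n :=
  'i *: map_mx (fun z : int => z%:~R) (A - A^T).

Definition ctr (m n : nat) (M : 'M[algC]_(m, n)) : 'M[algC]_(n, m) :=
  (map_mx (@Num.conj _) M)^T.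

Definition onesv (n : nat) : 'cV[algC]_n := const_mx 1.

Definition eig_proj (n : nat) (S : 'M[algC]_n) (t : algC) (E : 'M[algC]_n) : Prop :=
  E *m E = E /\ ctr E = E /\
  (forall v : 'cV[algC]_n, (exists w : 'cV[algC]_n, v = E *m w) <-> S *m v = t *: v).

Definition main_angle (n : nat) (E : 'M[algC]_n) : algC :=
  sqrtC ((ctr (E *m onesv n) *m (E *m onesv n)) 0 0) / sqrtC (n%:R).

Definition type2 (n : nat) (S : 'M[algC]_n) : Prop :=
  exists (t : algC) (E : 'M[algC]_n),
    root (char_poly S) t /\
    (forall r, root (char_poly S) r -> t <= r) /\
    eig_proj S t E /\
    main_angle E != 0 /\
    (1 < mup t (char_poly S))%N.

Definition is_skew_hadamard (n : nat) (H : 'M[int]_n) : Prop :=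
  (forall x y, H x y = 1 \/ H x y = -1) /\
  H + H^T = 2%:M /\
  H *m H^T = (n%:R)%:M.

From HB Require Import structures.
From mathcomp Require Import all_boot all_order all_algebra all_field.
From mathcomp Require Import ring zify.
Set Implicit Arguments.
Unset Strict Implicit.
Unset Printing Implicit Defensive.

Import Order.TTheory GRing.Theory Num.Theory.
Local Open Scope ring_scope.

(* The Seidel matrix S is Hermitian and, by Cayley-Hamilton, S^2 - theta^2 is
   nilpotent; a nilpotent Hermitian matrix vanishes, so S^2 = theta^2 I.  Since
   S^2 = (A - A^T)(A - A^T)^T has diagonal n - 1, the rows of A - A^T are
   orthogonal of norm n - 1, which makes I + A - A^T skew Hadamard.  Type (2)
   forces the multiplicity d of -theta to exceed 1, so n = 2d > 2, and the order
   of a Hadamard matrix larger than 2 is divisible by 4. *)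

Lemma ctr_mul m n p (P : 'M[algC]_(m, n)) (Q : 'M[algC]_(n, p)) :
  ctr (P *m Q) = ctr Q *m ctr P.
Proof. by rewrite /ctr map_mxM trmx_mul. Qed.

Lemma ctr_exp n (P : 'M[algC]_n.+1) k : ctr (P ^+ k) = ctr P ^+ k.
Proof.
elim: k => [|k IH]; first by rewrite !expr0 /ctr map_mx1 trmx1.
by rewrite exprS -mulmxE ctr_mul IH exprSr mulmxE.
Qed.

Lemma ctrB m n (P Q : 'M[algC]_(m, n)) : ctr (P - Q) = ctr P - ctr Q.
Proof. by apply/matrixP => i j; rewrite /ctr !mxE rmorphB. Qed.

Lemma ctr_scalar n (a : algC) : ctr (a%:M : 'M_n) = a^*%:M.
Proof. by rewrite /ctr map_scalar_mx tr_scalar_mx. Qed.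

(* The diagonal of [P *m ctr P] holds the squared row norms of [P]. *)
Lemma hermitian_sqr_eq0 n (P : 'M[algC]_n) : ctr P = P -> P *m P = 0 -> P = 0.
Proof.
move=> hP hP2; apply/matrixP => i j.
have : (P *m ctr P) i i = 0 by rewrite hP hP2 mxE.
rewrite mxE => hsum.
have hnorm : \sum_k `|P i k| ^+ 2 = 0.
  by rewrite -[RHS]hsum; apply: eq_bigr => k _; rewrite normCK /ctr !mxE.
have := psumr_eq0P (fun k _ => exprn_ge0 2 (normr_ge0 (P i k))) hnorm (i := j) isT.
by rewrite mxE => /eqP; rewrite expf_eq0 normr_eq0 => /eqP.
Qed.

Lemma hermitian_nilpotent_eq0 n (P : 'M[algC]_n.+1) k :
  ctr P = P -> P ^+ k.+1 = 0 -> P = 0.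
Proof.
move=> hP; elim: k => [|k IH]; first by rewrite expr1.
move=> hk; apply: IH; apply: hermitian_sqr_eq0; first by rewrite ctr_exp hP.
by rewrite mulmxE -exprD addnS -addSn exprD hk mul0r.
Qed.

Lemma hermitian_char_pm_sqr n (S : 'M[algC]_n.+1) (theta : algC) d :
  (0 < d)%N -> ctr S = S -> theta \is Num.real ->
  char_poly S = ('X + theta%:P) ^+ d * ('X - theta%:P) ^+ d ->
  S *m S = (theta ^+ 2)%:M.
Proof.
case: d => [//|d] _ hS hth hchar; apply/eqP; rewrite -subr_eq0; apply/eqP.
have hP : (S * S - (theta ^+ 2)%:M) ^+ d.+1 = 0.
  have := Cayley_Hamilton S; rewrite hchar -exprMn.
  have -> : ('X + theta%:P) * ('X - theta%:P) = 'X * 'X - (theta ^+ 2)%:P.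
    by rewrite expr2 polyCM; ring.
  by rewrite rmorphXn rmorphB rmorphM /= horner_mx_X horner_mx_C.
rewrite mulmxE; apply: hermitian_nilpotent_eq0 hP.
by rewrite ctrB ctr_scalar -mulmxE ctr_mul hS rmorphXn /= conj_Creal.
Qed.

Lemma seidel_hermitian n (A : 'M[int]_n) : ctr (seidel A) = seidel A.
Proof.
apply/matrixP => i j; rewrite /ctr /seidel !mxE.
by rewrite rmorphM rmorph_int /= conjCi -[A i j - A j i]opprB intrN mulrN mulNr.
Qed.

Lemma seidel_sqr n (A : 'M[int]_n) :
  seidel A *m seidel A = map_mx intr ((A - A^T) *m (A - A^T)^T).
Proof.
rewrite /seidel -scalemxAl -scalemxAr scalerA -expr2 sqrCi scaleN1r.
rewrite map_mxM -map_trmx -mulmxN; congr (_ *m _).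
by apply/matrixP => i j; rewrite !mxE -intrN opprB.
Qed.

Lemma tournament_skew_sqr n (A : 'M[int]_n) i k : is_tournament_adj A ->
  (A - A^T) i k ^+ 2 = (k != i)%:R.
Proof.
case=> h01 [_ hsum]; rewrite !mxE.
have [->|hki] := eqVneq k i; first by rewrite subrr expr0n.
by have := hsum _ _ hki; case: (h01 i k) => ->; case: (h01 k i) => ->.
Qed.

Lemma tournament_skew_mul_tr_diag n (A : 'M[int]_n.+1) i : is_tournament_adj A ->
  ((A - A^T) *m (A - A^T)^T) i i = n%:R.
Proof.
move=> htour; rewrite mxE.
under eq_bigr => k _ do rewrite [_^T k i]mxE -expr2 tournament_skew_sqr //.
rewrite (bigD1 i) //= eqxx add0r.
under eq_bigr => k hk do rewrite hk.
by rewrite sumr_const cardC1 card_ord.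
Qed.

Lemma tournament_skew_orthogonal n (A : 'M[int]_n.+1) (c : algC) :
  is_tournament_adj A -> map_mx intr ((A - A^T) *m (A - A^T)^T) = c%:M ->
  (A - A^T) *m (A - A^T)^T = n%:R%:M.
Proof.
move=> htour hc; apply/matrixP => i j; rewrite [RHS]mxE.
have [<-|hij] := eqVneq i j; first by rewrite tournament_skew_mul_tr_diag.
have := congr1 (fun X : 'M[algC]_n.+1 => X i j) hc.
by rewrite !mxE (negbTE hij) mulr0n => /eqP; rewrite intr_eq0 => /eqP.
Qed.

Lemma skew_hadamard_of_tournament n (A : 'M[int]_n.+1) : is_tournament_adj A ->
  (A - A^T) *m (A - A^T)^T = n%:R%:M -> is_skew_hadamard (1%:M + A - A^T).
Proof.
move=> htour hMM; have [h01 [_ hsum]] := htour.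
have hMT : (A - A^T)^T = - (A - A^T) by apply/matrixP => i j; rewrite !mxE opprB.
split; [|split].
- move=> i j; rewrite !mxE; have [<-|hij] := eqVneq i j; first by rewrite addrK; left.
  by have := hsum _ _ hij; case: (h01 i j) => ->; case: (h01 j i) => -> //; [right|left].
- by apply/matrixP => i j; rewrite !mxE [i == j]eq_sym; case: (j == i) => /=; lia.
- rewrite -addrA raddfD /= tr_scalar_mx mulmxDl !mulmxDr mul1mx mulmx1 hMM hMT.
  by rewrite mul1mx addrA addrNK -raddfD /= addrC natr1.
Qed.

(* Expanding [(h_1 + h_2) . (h_1 + h_3)] over three distinct rows; every
   summand [(a + b) (a + c)] with [a, b, c = +-1] is divisible by 4. *)
Lemma hadamard_order_dvd4 n (H : 'M[int]_n) : (2 < n)%N ->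
  (forall x y, H x y = 1 \/ H x y = -1) -> H *m H^T = n%:R%:M -> (4 %| n)%N.
Proof.
move=> h2 hpm hH.
pose a := Ordinal (ltnW (ltnW h2)); pose b := Ordinal (ltnW h2); pose c := Ordinal h2.
have row_dot i j : \sum_k H i k * H j k = (n%:R%:M : 'M[int]_n) i j.
  by rewrite -hH mxE; apply: eq_bigr => k _; rewrite mxE.
have hsum : \sum_k (H a k + H b k) * (H a k + H c k) = n%:R.
  rewrite (eq_bigr (fun k => H a k * H a k + H a k * H c k + H b k * H a k + H b k * H c k));
    last by move=> k _; ring.
  by rewrite !big_split /= !row_dot !mxE /= !mulr0n !addr0 mulr1n.
have : (4 %| \sum_k (H a k + H b k) * (H a k + H c k))%Z.
  apply: rpred_sum => k _.
  by case: (hpm a k) => ->; case: (hpm b k) => ->; case: (hpm c k) => ->.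
by rewrite hsum dvdzE (natz n) absz_nat.
Qed.

Lemma type2_pm_mult n (S : 'M[algC]_n) (theta : algC) d : 0 < theta ->
  type2 S -> char_poly S = ('X + theta%:P) ^+ d * ('X - theta%:P) ^+ d ->
  (1 < d)%N.
Proof.
move=> hth [t [E [_ [tmin [_ [_ hmup]]]]]] hchar.
have eX : 'X + theta%:P = 'X - (- theta)%:P by rewrite polyCN opprK.
have hneq : theta != - theta by rewrite -addr_eq0 -mulr2n mulrn_eq0 (gt_eqF hth).
move: hmup; rewrite hchar eX mupM ?expf_neq0 ?polyXsubC_eq0 // !mup_XsubCX.
have [<-|_] := eqVneq (- theta) t; first by rewrite (negbTE hneq) addn0.
have [ht|_] := eqVneq theta t; last by [].
rewrite -{}ht in tmin; case: d hchar => [//|d] hchar _.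
have /tmin : root (char_poly S) (- theta) by rewrite hchar eX rootM !root_exp_XsubC eqxx.
by rewrite -subr_ge0 -opprD oppr_ge0 -mulr2n pmulrn_lle0 // (lt_geF hth).
Qed.

Lemma odd_of_dvd4_double n : (4 %| n.*2)%N -> ~~ odd n.
Proof. by rewrite -muln2 -[4%N]/(2 * 2)%N dvdn_pmul2r // dvdn2. Qed.

Theorem lemma4p4 (d : nat) (A : 'M[int]_(d.*2)) (theta : algC) :
  (1 <= d)%N ->
  is_tournament_adj A ->
  type2 (seidel A) ->
  0 < theta ->
  char_poly (seidel A) = ('X + theta%:P) ^+ d * ('X - theta%:P) ^+ d ->
  ~~ odd d /\ is_skew_hadamard (1%:M + A - A^T).
Proof.
case: d A => [//|d] A hd htour htype hth hchar.
have d_gt0 : (1 < d.+1)%N := type2_pm_mult hth htype hchar.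
have hS2 := hermitian_char_pm_sqr hd (seidel_hermitian A) (gtr0_real hth) hchar.
have hMM := tournament_skew_orthogonal htour (etrans (esym (seidel_sqr A)) hS2).
have hH := skew_hadamard_of_tournament htour hMM; have [hpm [_ hHHt]] := hH.
split=> //; apply/odd_of_dvd4_double/(hadamard_order_dvd4 _ hpm hHHt).
by change (0 < d.*2)%N; rewrite double_gt0.
Qed.
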